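(* Let $q\ge 2$ and let $(\epsilon_n)_{n\ge1}$ be positive reals with $\epsilon_n\to 0$. Then there exist, for all sufficiently large $n$, ID codes for $\Pi^q_n$ with $M_n\ge 2^{\epsilon_n n^{q-1}}$ messages, type-I error probability $\lambda_{1,n}=0$ and type-II error probability $\lambda_{2,n}$, such that $\lambda_{2,n}\to 0$ as $n\to\infty$.
   Context: Fix an integer $q\ge 2$ and let $\mathcal A_q=\{1,\dots,q\}$. For $n\ge 1$, $S_n$ is the symmetric group on $\{1,\dots,n\}$, and for $\mathbf x\in\mathcal A_q^n$, $\sigma\in S_n$, we write $\sigma\mathbf x=(x_{\sigma^{-1}(1)},\dots,x_{\sigma^{-1}(n)})$. The $n$-block $q$-ary uniform permutation channel $\Pi^q_n$ has input and output alphabet $\mathcal A_q^n$ and transition probabilities $\Pi^q_n(\mathbf y\mid\mathbf x)=\frac{1}{n!}\sum_{\sigma\in S_n}\mathbf 1\{\mathbf y=\sigma\mathbf x\}$; $\Pi^q$ denotes the family $(\Pi^q_n)_{n\ge1}$. An ID code (with deterministic decoders) with $M$ messages for $\Pi^q_n$ (an ''$(n,M,\lambda_1,\lambda_2)$ ID code'') is a family $\{(Q_i,\mathcal D_i)\}_{i=1}^M$ where each $Q_i$ is a probability distribution on $\mathcal A_q^n$ (the stochastic encoder of message $i$) and $\mathcal D_i\subseteq\mathcal A_q^n$ (the acceptance region of message $i$). Its error probabilities are $\lambda_{i\to j}=\sum_{\mathbf x}Q_i(\mathbf x)\sum_{\mathbf y\in\mathcal D_j}\Pi^q_n(\mathbf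 y\mid\mathbf x)$ for $i\ne j$ and $\lambda_{i\not\to i}=\sum_{\mathbf x}Q_i(\mathbf x)\sum_{\mathbf y\notin\mathcal D_i}\Pi^q_n(\mathbf y\mid\mathbf x)$; the type-I error probability is $\lambda_1=\max_i\lambda_{i\not\to i}$ and the type-II error probability is $\lambda_2=\max_{i\ne j}\lambda_{i\to j}$. *)

From HB Require Import structures.
From mathcomp Require Import all_boot all_order all_algebra all_fingroup.
From mathcomp Require Import all_classical all_reals.
From mathcomp Require Import topology normedtype sequences exp.
Set Implicit Arguments. Unset Strict Implicit. Unset Printing Implicit Defensive.
Import Order.TTheory GRing.Theory Num.Theory.
Local Open Scope ring_scope.

(* Alphabet A_q is represented by 'I_q (i.e. {0,...,q-1}); words of length n. *)
Definition word (q n : nat) := {ffun 'I_n -> 'I_q}.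

Definition permw (q n : nat) (s : 'S_n) (x : word q n) : word q n :=
  [ffun i => x (s^-1 i)%g].

Definition Pi {R : realType} (q n : nat) (y x : word q n) : R :=
  (#|[set s : 'S_n | y == permw s x]|)%:R / (n`!)%:R.

Definition is_distr {R : realType} (q n : nat) (Q : {ffun word q n -> R}) : Prop :=
  (forall x, 0 <= Q x) /\ \sum_x Q x = 1.

Definition err_to {R : realType} (q n : nat) (Q : {ffun word q n -> R})
  (D : {set word q n}) : R :=
  \sum_x Q x * \sum_(y in D) Pi y x.

Definition err_miss {R : realType} (q n : nat) (Q : {ffun word q n -> R})
  (D : {set word q n}) : R :=
  \sum_x Q x * \sum_(y in ~: D) Pi y x.

Definition lambda1 {R : realType} (q n M : nat)
  (Q : 'I_M -> {ffun word q n -> R}) (D : 'I_M -> {set word q n}) : R :=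
  \big[Num.max/0]_(i < M) err_miss (Q i) (D i).

Definition lambda2 {R : realType} (q n M : nat)
  (Q : 'I_M -> {ffun word q n -> R}) (D : 'I_M -> {set word q n}) : R :=
  \big[Num.max/0]_(i < M) \big[Num.max/0]_(j < M | j != i) err_to (Q i) (D j).

From HB Require Import structures.
From mathcomp Require Import all_boot all_order all_algebra all_fingroup.
From mathcomp Require Import all_classical all_reals.
From mathcomp Require Import topology normedtype sequences exp.
From mathcomp Require Import zify lra.
Import Order.TTheory GRing.Theory Num.Theory.
Import numFieldNormedType.Exports.
Set Implicit Arguments. Unset Strict Implicit. Unset Printing Implicit Defensive.

(* The permutation channel delivers exactly the type (vector of letter counts)
   of its input, so on permutation-invariant decoding sets it is a noiseless
   channel whose inputs are the roughly [n ^ (q - 1)] types.  A message is a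
   codeword [c] of a code of length [m] over [b] symbols in which distinct
   codewords agree in fewer than [r] coordinates; it is sent as the type
   encoding the pair [(k, c k)] for a uniform coordinate [k], and [c'] is
   accepted when the received type encodes some pair [(k, c' k)].  This never
   misses, and confuses [c] with [c'] with probability at most [r / m].  With
   [m = t r] and [b = 4 ^ t], the Gilbert-Varshamov bound gives [2 ^ (t r)]
   codewords; taking [r] just above [eps n * n ^ (q - 1)] and [t] as large as
   the number of types allows, [t] tends to infinity since [eps n] tends to 0. *)

Lemma divn_modn_interval i L j g : g <= L ->
  (i %/ L == j) && (i %% L < g) = (j * L <= i < j * L + g).
Proof.
move=> le_gL; have [L0|L_gt0] := posnP L.
  by move: le_gL; rewrite L0 leqn0 => /eqP->; rewrite muln0 !ltn0 !andbF.
have lt_r := ltn_pmod i L_gt0; rewrite [in RHS](divn_eq i L).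
move: (i %/ L) (i %% L) lt_r => d r lt_r.
have [->|ne_dj] := eqVneq d j; first by rewrite leq_addr ltn_add2l.
nia.
Qed.

Lemma leq_expn_divn d n : 0 < d <= n -> n ^ d <= (2 * d) ^ d * (n %/ d) ^ d.
Proof.
case/andP=> d_gt0 le_dn; rewrite -expnMn leq_exp2r //.
have := ltn_ceil n d_gt0; have : d <= n %/ d * d by rewrite leq_pmull ?divn_gt0.
lia.
Qed.

Definition counts q n (x : word q n) : {ffun 'I_q -> nat} :=
  [ffun a => #|[set i | x i == a]|].

Lemma counts_permw q n (s : 'S_n) (x : word q n) : counts (permw s x) = counts x.
Proof.
apply/ffunP => a; rewrite !ffunE -[RHS](card_preimset _ (@perm_inj _ s^-1)%g).
by apply: eq_card => i; rewrite !inE ffunE.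
Qed.

Lemma card_ord_interval n lo hi : lo <= hi <= n ->
  #|[set i : 'I_n | lo <= i < hi]| = hi - lo.
Proof.
case/andP=> le_lo_hi le_hi_n; rewrite -sum1_card.
rewrite (eq_bigl (fun i : 'I_n => (i < hi) && (lo <= i))); last first.
  by move=> i; rewrite inE andbC.
rewrite -(big_geq_mkord _ _ (fun i => i < hi) (fun=> 1)).
by rewrite -(big_nat_widen _ _ _ predT) // sum_nat_const_nat muln1.
Qed.

Definition block_word q L n (g : {ffun 'I_q -> 'I_L}) : word q.+1 n :=
  [ffun i : 'I_n => if insub (i %/ L) is Some j
     then (if i %% L < g j then lift ord0 j else ord0) else ord0].

Lemma block_word_eq_lift q L n (g : {ffun 'I_q -> 'I_L}) (i : 'I_n) (j : 'I_q) :
  (block_word n g i == lift ord0 j) = (i %/ L == j) && (i %% L < g j).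
Proof.
rewrite ffunE; case: insubP => [k _ val_k|ge_q]; last first.
  by rewrite (negbTE (neq_lift _ _)); case: eqP => // eq_j; rewrite eq_j ltn_ord in ge_q.
rewrite -val_k (inj_eq val_inj); case: ifP => [lt_mod|ge_mod].
  by rewrite (inj_eq lift_inj); case: eqP => // <-; rewrite lt_mod.
by rewrite (negbTE (neq_lift _ _)); case: eqP => // <-; rewrite ge_mod.
Qed.

Lemma counts_block_word q L n (g : {ffun 'I_q -> 'I_L}) (j : 'I_q) :
  q * L <= n -> counts (block_word n g) (lift ord0 j) = g j.
Proof.
move=> le_qL_n; have le_jL : j.+1 * L <= q * L by rewrite leq_mul2r ltn_ord orbT.
rewrite ffunE -(addKn (j * L) (g j)) -(@card_ord_interval n); last first.
  by rewrite leq_addr /=; rewrite mulSn in le_jL; have := ltn_ord (g j); lia.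
apply: eq_card => i; rewrite !inE block_word_eq_lift.
exact/divn_modn_interval/ltnW.
Qed.

Lemma block_word_counts_inj q L n : q * L <= n ->
  injective (fun g : {ffun 'I_q -> 'I_L} => counts (block_word n g)).
Proof.
move=> le_qL_n g g' /= /ffunP eq_counts; apply/ffunP => j; apply/val_inj.
by have := eq_counts (lift ord0 j); rewrite !counts_block_word.
Qed.

Lemma injection_of_leq_card (T U : finType) :
  #|T| <= #|U| -> {f : T -> U | injective f}.
Proof.
move=> le_TU; exists (fun x => enum_val (widen_ord le_TU (enum_rank x))).
by move=> x y /enum_val_inj /(congr1 val) /= /val_inj; exact: enum_rank_inj.
Qed.

Lemma leq_card_bigcup (T J : finType) (P : pred J) (F : J -> {set T}) :
  #|\bigcup_(j | P j) F j| <= \sum_(j | P j) #|F j|.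
Proof.
elim/big_rec2: _ => [|j k U _ le_U_k]; first by rewrite cards0.
by rewrite (leq_trans (leq_card_setU (F j) U).1) ?leq_add2l.
Qed.

Section GilbertVarshamov.
Variables (I B : finType).
Implicit Types (c w : {ffun I -> B}) (C : {set {ffun I -> B}}).

Definition agree c c' := #|[set i | c i == c' i]|.

Lemma agreeC c c' : agree c c' = agree c' c.
Proof. by apply: eq_card => i; rewrite !inE eq_sym. Qed.

Lemma agreexx c : agree c c = #|I|.
Proof. by apply: eq_card => i; rewrite !inE eqxx. Qed.

Lemma card_ffun_fixed (A : {set I}) c :
  #|[set w : {ffun I -> B} | [forall i in A, w i == c i]]| = #|B| ^ #|~: A|.
Proof.
pose F i : pred B := if i \in A then pred1 (c i) else predT.
rewrite (eq_card (B := family F)) => [|w]; last first.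
  rewrite inE; apply/forall_inP/familyP => [fixed i|fixed i iA].
    by rewrite /F; case: ifP => // /fixed; rewrite inE.
  by have := fixed i; rewrite /F iA inE.
rewrite card_family foldrE big_image /= (eq_bigr (fun i => if i \in ~: A then #|B| else 1)).
  by rewrite -big_mkcond prod_nat_const.
by move=> i _; rewrite /F inE; case: (i \in A); rewrite ?card1.
Qed.

Lemma card_agree_ge c r : 0 < #|B| ->
  #|[set w : {ffun I -> B} | r <= agree w c]| <= 2 ^ #|I| * #|B| ^ (#|I| - r).
Proof.
move=> B_gt0.
have sub : [set w : {ffun I -> B} | r <= agree w c] \subset
    \bigcup_(A : {set I} | r <= #|A|) [set w : {ffun I -> B} | [forall i in A, w i == c i]].
  apply/fintype.subsetP => w; rewrite inE => le_r; apply/bigcupP.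
  by exists [set i | w i == c i] => //; rewrite inE; apply/forall_inP => i; rewrite inE.
apply: leq_trans (subset_leq_card sub) _; apply: leq_trans (leq_card_bigcup _ _) _.
apply: (@leq_trans (\sum_(A : {set I} | r <= #|A|) #|B| ^ (#|I| - r))).
  apply: leq_sum => A le_r; rewrite card_ffun_fixed leq_pexp2l //.
  by have := cardsC A; lia.
rewrite sum_nat_const leq_mul2r; apply/orP; right.
by rewrite -cardsT -(card_powerset [set: I]) subset_leq_card ?powersetT.
Qed.

Definition agree_lt r C :=
  [forall c in C, forall c' in C, (c != c') ==> (agree c c' < r)].

Lemma agree_ltP r C c c' :
  agree_lt r C -> c \in C -> c' \in C -> c != c' -> agree c c' < r.
Proof. by move=> /forall_inP/(_ c) ltc /ltc /forall_inP/(_ c') ltcc' /ltcc' /implyP. Qed.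

(* A maximal code of minimum "distance" [#|I| - r + 1] is covering: every word
   agrees in at least [r] places with some codeword. *)
Lemma gilbert_varshamov r : 0 < #|B| -> r <= #|I| ->
  {C | agree_lt r C & #|B| ^ #|I| <= #|C| * (2 ^ #|I| * #|B| ^ (#|I| - r))}.
Proof.
move=> B_gt0 le_r.
have lt_set0 : agree_lt r finset.set0 by apply/forall_inP => c; rewrite inE.
have [C maxC _] := maxset_exists lt_set0; have ltC := maxsetp maxC; exists C => //.
have cover : [set: {ffun I -> B}] \subset
    \bigcup_(c in C) [set w : {ffun I -> B} | r <= agree w c].
  apply/fintype.subsetP => w _; apply/bigcupP.
  have [wC|wNC] := boolP (w \in C); first by exists w; rewrite // inE agreexx.
  have [c /andP[cC le_r_c]|far] := pickP [pred c | (c \in C) && (r <= agree w c)].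
    by exists c; rewrite ?inE.
  have ltwC : agree_lt r (w |: C).
    apply/forall_inP => c1 c1C; apply/forall_inP => c2 c2C; apply/implyP.
    move: c1C c2C; rewrite !in_setU1 => /orP[/eqP->|c1C] /orP[/eqP->|c2C] neq.
    - by rewrite eqxx in neq.
    - by have := far c2; rewrite /= c2C /= ltnNge => ->.
    - by have := far c1; rewrite /= c1C /= agreeC ltnNge => ->.
    - exact: agree_ltP ltC c1C c2C neq.
  by rewrite -(maxsetsup maxC ltwC (finset.subsetUr [set w] C)) setU11 in wNC.
rewrite -card_ffun -[#|{ffun I -> B}|]cardsT; apply: leq_trans (subset_leq_card cover) _.
apply: leq_trans (leq_card_bigcup _ _) _; rewrite -sum_nat_const leq_sum //.
by move=> c _; apply: card_agree_ge.
Qed.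

End GilbertVarshamov.

Local Open Scope ring_scope.

Section PermutationChannel.
Variables (R : realType) (q n : nat).

Definition perm_invariant (D : {set word q n}) := forall s y, (permw s y \in D) = (y \in D).

Lemma perm_invariantC D : perm_invariant D -> perm_invariant (~: D).
Proof. by move=> invD s y; rewrite !inE invD. Qed.

(* Every permutation of [x] lands in [D] or none does, so the channel decides
   membership in [D] without error. *)
Lemma sum_Pi_perm_invariant (D : {set word q n}) x :
  perm_invariant D -> \sum_(y in D) Pi (R:=R) y x = (x \in D)%:R.
Proof.
move=> invD; rewrite /Pi -mulr_suml -natr_sum.
have -> : (\sum_(y in D) #|[set s : 'S_n | y == permw s x]| = (x \in D) * n`!)%N.
  transitivity (\sum_(s : 'S_n | permw s x \in D) 1)%N.
    rewrite (partition_big (fun s => permw s x) (mem D)) //=.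
    apply: eq_bigr => y yD; rewrite -sum1_card; apply: eq_bigl => s.
    by rewrite inE eq_sym; case: eqP => [->|]; rewrite ?yD ?andbF.
  rewrite (eq_bigl (fun=> x \in D)) => [|s]; last exact: invD.
  case: (x \in D); last by rewrite big_pred0.
  by rewrite mul1n -card_Sn -sum1_card.
by rewrite natrM mulfK // pnatr_eq0 -lt0n fact_gt0.
Qed.

Lemma err_to_perm_invariant (Q : {ffun word q n -> R}) D :
  perm_invariant D -> err_to Q D = \sum_x Q x * (x \in D)%:R.
Proof. by move=> invD; apply: eq_bigr => x _; rewrite sum_Pi_perm_invariant. Qed.

Lemma err_miss_perm_invariant (Q : {ffun word q n -> R}) D :
  perm_invariant D -> err_miss Q D = \sum_x Q x * (x \notin D)%:R.
Proof.
move=> /perm_invariantC invCD; apply: eq_bigr => x _.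
by rewrite sum_Pi_perm_invariant // inE.
Qed.

Definition uniform_on m (w : 'I_m -> word q n) : {ffun word q n -> R} :=
  [ffun x => m%:R^-1 * \sum_(k < m) (w k == x)%:R].

Lemma expect_uniform_on m (w : 'I_m -> word q n) (f : word q n -> R) :
  \sum_x uniform_on w x * f x = m%:R^-1 * \sum_(k < m) f (w k).
Proof.
under eq_bigr do rewrite ffunE -mulrA mulr_suml.
rewrite -mulr_sumr exchange_big /=; congr (_ * _); apply: eq_bigr => k _.
rewrite (bigD1 (w k)) //= eqxx mul1r big1 ?addr0 // => x /negbTE.
by rewrite eq_sym => ->; rewrite mul0r.
Qed.

Lemma uniform_on_distr m (w : 'I_m -> word q n) :
  (0 < m)%N -> is_distr (uniform_on w).
Proof.
move=> m_gt0; split=> [x|].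
  by rewrite ffunE mulr_ge0 ?invr_ge0 ?ler0n ?sumr_ge0.
have := expect_uniform_on w (fun=> 1); under eq_bigr do rewrite mulr1.
by move=> ->; rewrite sumr_const card_ord mulVf // pnatr_eq0 -lt0n.
Qed.

Lemma lambda1_eq0 M (Q : 'I_M -> {ffun word q n -> R}) D :
  (forall i, err_miss (Q i) (D i) = 0) -> lambda1 Q D = 0.
Proof.
move=> miss0; apply: (big_ind (fun v => v = 0)) => // u v -> ->.
exact: maxxx.
Qed.

Lemma lambda2_le M (Q : 'I_M -> {ffun word q n -> R}) D a : 0 <= a ->
  (forall i j, j != i -> err_to (Q i) (D j) <= a) -> lambda2 Q D <= a.
Proof.
have max_le u v : u <= a -> v <= a -> Num.max u v <= a by rewrite ge_max => -> ->.
move=> a_ge0 err_le; apply: (big_ind (fun v => v <= a)) => // i _.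
by apply: (big_ind (fun v => v <= a)) => // j; apply: err_le.
Qed.

Lemma lambda2_ge0 M (Q : 'I_M -> {ffun word q n -> R}) D : 0 <= lambda2 Q D.
Proof. by apply/bigmax_geP; left. Qed.

End PermutationChannel.

Section IdentificationCode.
Variables (R : realType) (q n m : nat) (B : finType) (w : 'I_m * B -> word q n).
Hypothesis w_counts_inj : injective (fun u => counts (w u)).
Implicit Types c : {ffun 'I_m -> B}.

Definition id_encoder c : {ffun word q n -> R} := uniform_on R (fun k => w (k, c k)).

Definition id_decoder c : {set word q n} :=
  [set y | [exists k, counts y == counts (w (k, c k))]].

Lemma id_decoder_perm_invariant c : perm_invariant (id_decoder c).
Proof. by move=> s y; rewrite !inE counts_permw. Qed.

Lemma mem_id_decoder c c' k : (w (k, c k) \in id_decoder c') = (c k == c' k).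
Proof.
rewrite inE; apply/existsP/eqP => [[k' /eqP /w_counts_inj [-> ->]] //|->].
by exists k.
Qed.

Lemma err_miss_id_code c : err_miss (id_encoder c) (id_decoder c) = 0.
Proof.
rewrite err_miss_perm_invariant; last exact: id_decoder_perm_invariant.
rewrite (expect_uniform_on _ (fun x => (x \notin _)%:R)).
by rewrite big1 ?mulr0 // => k _; rewrite mem_id_decoder eqxx.
Qed.

Lemma err_to_id_code c c' :
  err_to (id_encoder c) (id_decoder c') = m%:R^-1 * (agree c c')%:R.
Proof.
rewrite err_to_perm_invariant; last exact: id_decoder_perm_invariant.
rewrite (expect_uniform_on _ (fun x => (x \in _)%:R)).
congr (_ * _); rewrite /agree -sum1_card natr_sum [RHS]big_mkcond /=.
by apply: eq_bigr => k _; rewrite mem_id_decoder inE; case: eqP.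
Qed.

End IdentificationCode.

Record id_code (R : realType) q n := IdCode {
  id_size : nat;
  id_enc : 'I_id_size -> {ffun word q n -> R};
  id_dec : 'I_id_size -> {set word q n} }.
Arguments id_enc {R q n} _ _.
Arguments id_dec {R q n} _ _.

Lemma id_code_exists (R : realType) q L n t r :
  (0 < t)%N -> (0 < r)%N -> (q * L <= n)%N -> (t * r * 2 ^ (2 * t) <= L ^ q)%N ->
  exists c : id_code R q.+1 n,
    [/\ forall i, is_distr (id_enc c i), (2 ^ (t * r) <= id_size c)%N,
        lambda1 (id_enc c) (id_dec c) = 0 & lambda2 (id_enc c) (id_dec c) <= t%:R^-1].
Proof.
move=> t_gt0 r_gt0 le_qL_n le_size.
set m := (t * r)%N; set b := (2 ^ (2 * t))%N.
have [e e_inj] : {e : 'I_m * 'I_b -> {ffun 'I_q -> 'I_L} | injective e}.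
  by apply: injection_of_leq_card; rewrite card_prod card_ffun !card_ord.
pose w u := block_word n (e u).
have w_inj : injective (fun u => counts (w u)).
  by move=> u v /(block_word_counts_inj le_qL_n) /e_inj.
have b_gt0 : (0 < #|'I_b|)%N by rewrite card_ord expn_gt0.
have le_r_m : (r <= #|'I_m|)%N by rewrite card_ord leq_pmull.
have [C ltC le_C] := gilbert_varshamov b_gt0 le_r_m.
pose enc (i : 'I_#|C|) := id_encoder R w (enum_val i).
exists (IdCode enc (fun i => id_decoder w (enum_val i))); split => /=.
- by move=> i; apply: uniform_on_distr; rewrite muln_gt0 t_gt0.
- (* As [m = t r], the bound [b ^ m <= #|C| 2 ^ m b ^ (m - r)] reads [2 ^ m <= #|C|]. *)
  have pow2_b k : (b ^ k = 2 ^ (2 * t * k))%N by rewrite -expnM.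
  move: le_C; rewrite !card_ord !pow2_b -!expnD.
  have -> : (2 * t * m = m + (m + 2 * t * (m - r)))%N by rewrite /m; nia.
  by rewrite !expnD leq_pmul2r ?muln_gt0 ?expn_gt0.
- by apply: lambda1_eq0 => i; apply: err_miss_id_code.
- apply: lambda2_le => [|i j ji]; first by rewrite invr_ge0 ler0n.
  have neq_ij : enum_val i != enum_val j by apply: contra ji => /eqP/enum_val_inj->.
  have lt_r := agree_ltP ltC (enum_valP i) (enum_valP j) neq_ij.
  rewrite err_to_id_code //; apply: (@le_trans _ _ (m%:R^-1 * r%:R)).
    by rewrite ler_wpM2l ?invr_ge0 ?ler0n // ler_nat ltnW.
  by rewrite /m natrM invfM mulfVK // pnatr_eq0 -lt0n.
Qed.

Local Open Scope classical_set_scope.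

Lemma rate_budget (R : realFieldType) (w c e X L b : R) :
  0 < w -> 0 <= c -> 0 <= e -> e * (2 * w * c + 1) < 1 ->
  2 * w * c <= X -> X <= w * L -> b <= e * X + 1 -> c * b <= L.
Proof.
move=> w_gt0 c_ge0 e_ge0 small le_X le_L le_b.
have wc_ge0 : 0 <= w * c by nra.
have wce_X : 2 * (w * c * e) * X <= X by nra.
have wcb_le : w * c * b <= w * c * (e * X + 1) by nra.
rewrite -(ler_pM2l w_gt0); nra.
Qed.

Section Asymptotics.
Variables (R : realType) (d : nat) (eps : nat -> R).
Hypotheses (d_gt0 : (0 < d)%N) (eps_gt0 : forall n, (0 < n)%N -> 0 < eps n).
Hypothesis eps_cvg0 : eps @ \oo --> 0.

Definition bits n : nat := (Num.truncn (eps n * n%:R ^+ d)).+1.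

Lemma bits_gt n : eps n * n%:R ^+ d < (bits n)%:R.
Proof. exact: truncnS_gt. Qed.

Lemma bits_le n : (0 < n)%N -> (bits n)%:R <= eps n * n%:R ^+ d + 1.
Proof.
move=> n_gt0; rewrite /bits -addn1 natrD lerD2r truncn_le.
by rewrite mulr_ge0 ?exprn_ge0 ?ler0n ?ltW ?eps_gt0.
Qed.

Lemma powR_le_bits n t : (0 < t)%N ->
  2 `^ (eps n * n%:R ^+ d) <= (2 ^ (t * bits n))%:R.
Proof.
move=> t_gt0; apply: (@le_trans _ _ (2 `^ (bits n)%:R)).
  by rewrite ler_powR ?ler1n // ltW // bits_gt.
by rewrite powR_mulrn // -natrX ler_nat leq_pexp2l // leq_pmull.
Qed.

Definition fits n t := (t * bits n * 2 ^ (2 * t) <= (n %/ d) ^ d)%N.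

Lemma fits_near K : \forall n \near \oo, fits n K.
Proof.
set c := (K * 2 ^ (2 * K))%N; set W := ((2 * d) ^ d)%N.
have W_gt0 : (0 < W)%N by rewrite expn_gt0 muln_gt0 d_gt0.
have inv_gt0 : 0 < (2 * W * c).+1%:R^-1 :> R by rewrite invr_gt0 ltr0n.
near=> n.
have n_gt0 : (0 < n)%N by near: n; exact: nbhs_infty_gt.
have le_dn : (d <= n)%N by near: n; exact: nbhs_infty_ge.
have le_Wc_n : (2 * W * c <= n)%N by near: n; exact: nbhs_infty_ge.
have eps_lt : `|eps n| < (2 * W * c).+1%:R^-1 by near: n; exact: cvgr0_norm_lt.
have eps_ge0 : 0 <= eps n by rewrite ltW ?eps_gt0.
have le_Wc_X : (2 * W * c <= n ^ d)%N.
  by apply: leq_trans le_Wc_n _; rewrite -[leqLHS]expn1 leq_pexp2l.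
rewrite /fits mulnAC -/c -(ler_nat R) natrM.
apply: (@rate_budget _ W%:R c%:R (eps n) (n%:R ^+ d)); rewrite ?ltr0n ?ler0n //.
- by move: eps_lt; rewrite ger0_norm // -div1r ltr_pdivlMr ?ltr0n // -addn1 natrD !natrM.
- by rewrite -natrX -!natrM ler_nat.
- by rewrite -!natrX -natrM ler_nat leq_expn_divn ?d_gt0.
- exact: bits_le.
Unshelve. all: by end_near.
Qed.

Definition tmax n : nat := [arg max_(t > (ord0 : 'I_n.+1) | fits n t) t].

Lemma tmaxP n : fits n (tmax n) /\ forall t, (t <= n)%N -> fits n t -> (t <= tmax n)%N.
Proof.
rewrite /tmax; case: arg_maxnP => [|t fits_t t_max]; first by rewrite /fits !mul0n.
by split=> // t' le_t'n; apply: (t_max (Ordinal (le_t'n : (t' < n.+1)%N))).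
Qed.

Lemma tmax_near K : \forall n \near \oo, (K <= tmax n)%N.
Proof.
near=> n; apply: (tmaxP n).2; first by near: n; exact: nbhs_infty_ge.
by near: n; exact: fits_near.
Unshelve. all: by end_near.
Qed.

Lemma id_code_tmax n : exists c : id_code R d.+1 n, (0 < tmax n)%N ->
  [/\ forall i, is_distr (id_enc c i),
      2 `^ (eps n * n%:R ^+ d) <= (id_size c)%:R,
      lambda1 (id_enc c) (id_dec c) = 0 &
      lambda2 (id_enc c) (id_dec c) <= (tmax n)%:R^-1].
Proof.
have [->|t_gt0] := posnP (tmax n).
  by exists (IdCode (fun _ : 'I_0 => [ffun=> 0]) (fun _ => finset.set0)).
have le_dL_n : (d * (n %/ d) <= n)%N by rewrite mulnC leq_divM.
have [c [distr size l1 l2]] := id_code_exists R t_gt0 (ltn0Sn _) le_dL_n (tmaxP n).1.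
exists c => _; split => //; apply: le_trans (powR_le_bits _ t_gt0) _.
by rewrite ler_nat.
Qed.

End Asymptotics.

Theorem theorem1 (R : realType) (q : nat) (eps : nat -> R) :
  (2 <= q)%N ->
  (forall n : nat, (0 < n)%N -> 0 < eps n) ->
  eps @ \oo --> 0 ->
  exists (N : nat) (M : nat -> nat)
         (Q : forall n : nat, 'I_(M n) -> {ffun word q n -> R})
         (D : forall n : nat, 'I_(M n) -> {set word q n}),
    (forall n : nat, (N <= n)%N ->
       [/\ forall i, is_distr (Q n i),
           2 `^ (eps n * (n%:R) ^+ q.-1) <= (M n)%:R
         & lambda1 (Q n) (D n) = 0]) /\
    (fun n => lambda2 (Q n) (D n)) @ \oo --> 0.
Proof.
move=> q_ge2 eps_gt0 eps_cvg0; case: q q_ge2 => [|[|q]] // _ /=.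
pose t := tmax q.+1 eps; have code := id_code_tmax q.+1 eps.
pose f n := sval (cid (code n)); have f_code n := svalP (cid (code n)).
have [N _ t_pos] := tmax_near (ltn0Sn q) eps_gt0 eps_cvg0 1.
exists N, (fun n => id_size (f n)), (fun n => id_enc (f n)), (fun n => id_dec (f n)).
split=> [n /t_pos /(f_code n) []//|].
apply/cvgr0Pnorm_le => e e_gt0; near=> n.
have le_K_t : ((Num.truncn e^-1).+1 <= t n)%N.
  by near: n; exact: tmax_near (ltn0Sn q) eps_gt0 eps_cvg0 _.
have t_gt0 : (0 < t n)%N := leq_ltn_trans (leq0n _) le_K_t.
have [_ _ _ le_l2] := f_code n t_gt0.
rewrite ger0_norm ?lambda2_ge0 //; apply: le_trans le_l2 _.
rewrite -[e]invrK lef_pV2 ?posrE ?invr_gt0 ?ltr0n //.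
by apply: le_trans (ltW (truncnS_gt _)) _; rewrite ler_nat.
Unshelve. all: by end_near.
Qed.
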